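(* Let $k\ge1$ and let $A,B$ be FDSs. If $A^k=B^k$, then $[A]_0=[B]_0$.
   Context: A finite dynamical system (FDS) is a function $A:S_A\to S_A$ on a finite set, considered up to isomorphism of functional graphs. The product $AB$ acts on $S_A\times S_B$ by $(a,b)\mapsto(A(a),B(b))$ and $A^k$ is the $k$-fold product. A state $s$ is a cycle state if some $m$-fold iterate ($m>0$) of $A$ fixes $s$; $[A]_0$ is the restriction of $A$ to its cycle states (a permutation). *)

From mathcomp Require Import all_boot.
Set Implicit Arguments. Unset Strict Implicit. Unset Printing Implicit Defensive.

(* A finite dynamical system (FDS) is a map f : T -> T on a finite type T.
   FDSs are compared up to isomorphism of functional graphs. *)

Definition fds_iso (T U : finType) (f : T -> T) (g : U -> U) : Prop :=
  exists h : T -> U, bijective h /\ forall x, h (f x) = g (h x).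

Definition fds_pow (k : nat) (T : finType) (f : T -> T)
  : {ffun 'I_k -> T} -> {ffun 'I_k -> T} :=
  fun x => [ffun i => f (x i)].
Arguments fds_pow k {T} f _.

Definition cycle_state (T : Type) (f : T -> T) (s : T) : Prop :=
  exists m : nat, 0 < m /\ iter m f s = s.

(* [A]_0 = [B]_0: the restrictions of f and g to their cycle states are
   isomorphic, i.e. there is a bijection between the cycle states of f and
   those of g commuting with f and g. *)
Definition cycle_part_iso (T U : finType) (f : T -> T) (g : U -> U) : Prop :=
  exists h : T -> U,
    (forall x, cycle_state f x -> cycle_state g (h x)) /\
    (forall x y, cycle_state f x -> cycle_state f y -> h x = h y -> x = y) /\
    (forall y, cycle_state g y -> exists x, cycle_state f x /\ h x = y) /\
    (forall x, cycle_state f x -> h (f x) = g (h x)).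

(* Fixed points of the m-th iterate of A^k are the k-tuples of fixed points of
   A^m, so A^k = B^k gives |Fix(A^m)|^k = |Fix(B^m)|^k, hence
   |Fix(A^m)| = |Fix(B^m)| for every m > 0; all these points are cycle states.
   These counts determine the permutation [A]_0 up to conjugacy: if d is the
   least period occurring in [A]_0, then Fix(B^d) contains a point of period
   exactly d, the two cycles of length d are conjugate, and removing them
   lowers every count by the same amount, so induction on the number of cycle
   states builds the conjugacy. *)

From mathcomp Require Import all_boot zify.
Set Implicit Arguments. Unset Strict Implicit. Unset Printing Implicit Defensive.

Lemma iter_modn (T : Type) (f : T -> T) d n x :
  iter d f x = x -> iter n f x = iter (n %% d) f x.
Proof.
by move=> fdx; rewrite {1}(divn_eq n d) addnC iterD iterM (iter_fix _ fdx).
Qed.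

Section CycleStates.

Variables (T : finType) (f : T -> T).

Definition cycle_states : {set T} := [set x | fconnect f (f x) x].

Definition fixed_in (A : {set T}) m : {set T} := [set x in A | iter m f x == x].

Definition orbit_set x : {set T} := [set y | fconnect f x y].

Lemma cycle_statesP x : reflect (cycle_state f x) (x \in cycle_states).
Proof.
rewrite inE; apply: (iffP idP) => [/(orbitPcycle 2 3) [k fkx] | [m [m0 fmx]]].
  by exists k.+1.
by apply/(orbitPcycle 3 2); exists m.-1; rewrite prednK.
Qed.

Lemma cycle_states_stable : {homo f : x / x \in cycle_states}.
Proof.
move=> x /cycle_statesP [m [m0 fmx]]; apply/cycle_statesP.
by exists m; rewrite -iterSr iterS fmx.
Qed.

Lemma iter_order_cycle_state x : x \in cycle_states -> iter (order f x) f x = x.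
Proof. by rewrite inE => /(orbitPcycle 2 4). Qed.

Lemma iter_eq_order_dvd x n :
  x \in cycle_states -> (iter n f x == x) = (order f x %| n).
Proof.
move=> /iter_order_cycle_state fdx; rewrite (iter_modn n fdx) /dvdn.
have [-> | r_neq0] := eqVneq (n %% order f x) 0; first exact: eqxx.
apply/negbTE/eqP => frx; have := findex_iter (ltn_pmod n (order_gt0 f x)).
by rewrite frx findex0 => r0; rewrite -r0 eqxx in r_neq0.
Qed.

Lemma fixed_in_cycle_states m : 0 < m -> fixed_in cycle_states m = fixed_in setT m.
Proof.
move=> m0; apply/setP => x; rewrite !inE /=; apply: andb_idl => /eqP fmx.
suff: x \in cycle_states by rewrite inE.
by apply/cycle_statesP; exists m.
Qed.

Lemma card_orbit_set x : #|orbit_set x| = order f x.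
Proof. exact: cardsE. Qed.

Lemma orbit_set_stable x : {homo f : y / y \in orbit_set x}.
Proof. by move=> y; rewrite !inE => /connect_trans; apply; apply: fconnect1. Qed.

Lemma orbit_set_sub (A : {set T}) x :
  {homo f : y / y \in A} -> x \in A -> orbit_set x \subset A.
Proof.
by move=> fA xA; apply/subsetP => y; rewrite inE => /iter_findex <-; apply: iter_in.
Qed.

Section OrbitOfCycleState.

Variables (x : T) (x_cyc : x \in cycle_states).

Lemma order_orbit_set y :
  y \in orbit_set x -> y \in cycle_states /\ order f y = order f x.
Proof.
have cyc_x : fcycle f (orbit f x) by move: x_cyc; rewrite inE => /(orbitPcycle 2 0).
rewrite inE fconnect_orbit => yx.
have oyx := eq_order_cycle cyc_x (in_orbit f x) yx.
split=> //; rewrite inE; apply/(orbitPcycle 4 2).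
exact: (iter_order_cycle cyc_x).
Qed.

Lemma card_fixed_in_orbit m :
  #|fixed_in (orbit_set x) m| = if order f x %| m then order f x else 0.
Proof.
have -> : fixed_in (orbit_set x) m = if order f x %| m then orbit_set x else set0.
  apply/setP => y; have [yx | nyx] := boolP (y \in orbit_set x); last first.
    by rewrite inE (negbTE nyx); case: ifP => _; rewrite ?(negbTE nyx) ?inE.
  have [y_cyc oyx] := order_orbit_set yx.
  by rewrite inE yx /= iter_eq_order_dvd // oyx; case: ifP => _; rewrite ?yx ?inE.
by case: ifP; rewrite ?cards0 ?card_orbit_set.
Qed.

End OrbitOfCycleState.

Lemma card_fixed_inD (A S : {set T}) m :
  S \subset A -> #|fixed_in A m| = #|fixed_in S m| + #|fixed_in (A :\: S) m|.
Proof.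
move=> sSA; rewrite -(cardsID S (fixed_in A m)).
congr (_ + _); apply: eq_card => y.
  rewrite !inE andbC; have [yS | //] := boolP (y \in S).
  by rewrite (subsetP sSA).
by rewrite !inE andbA.
Qed.

Lemma mem_fixed_in (A : {set T}) x m :
  A \subset cycle_states -> x \in A -> (x \in fixed_in A m) = (order f x %| m).
Proof. by move=> Acyc xA; rewrite inE xA iter_eq_order_dvd ?(subsetP Acyc). Qed.

Lemma stable_setD_orbit (A : {set T}) x :
  {homo f : y / y \in A} -> A \subset cycle_states ->
  {homo f : y / y \in A :\: orbit_set x}.
Proof.
move=> fA Acyc y; rewrite !inE => /andP [nxy yA]; rewrite fA // andbT.
apply: contra nxy => /connect_trans; apply.
by move: (subsetP Acyc y yA); rewrite inE.
Qed.

End CycleStates.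

Lemma exists_same_order (T U : finType) (f : T -> T) (g : U -> U)
    (A : {set T}) (B : {set U}) x0 :
  A \subset cycle_states f -> B \subset cycle_states g ->
  (forall m, 0 < m -> #|fixed_in f A m| = #|fixed_in g B m|) -> x0 \in A ->
  exists2 x, x \in A & exists2 y, y \in B & order f x = order g y.
Proof.
move=> Acyc Bcyc eqAB x0A.
pose P m := (0 < m) && (0 < #|fixed_in f A m|).
have fixed_order x : x \in A -> P (order f x).
  move=> xA; rewrite /P order_gt0; apply/card_gt0P; exists x.
  by rewrite mem_fixed_in.
case: (ex_minnP (ex_intro P _ (fixed_order x0 x0A))) => d.
rewrite {1}/P => /andP [d_gt0 /card_gt0P [x xd]] d_min.
have /card_gt0P [y yd] : 0 < #|fixed_in g B d|.
  by rewrite -eqAB //; apply/card_gt0P; exists x.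
have xA : x \in A by move: xd; rewrite inE => /andP [].
have yB : y \in B by move: yd; rewrite inE => /andP [].
have ox : order f x = d.
  apply: anti_leq; rewrite d_min ?fixed_order // andbT dvdn_leq //.
  by rewrite -(mem_fixed_in _ Acyc xA).
have oy : order g y = d.
  apply: anti_leq; rewrite dvdn_leq -?(mem_fixed_in _ Bcyc yB) //=.
  apply: d_min; rewrite /P order_gt0 eqAB ?order_gt0 //.
  by apply/card_gt0P; exists y; rewrite mem_fixed_in.
by exists x => //; exists y; rewrite ?ox ?oy.
Qed.

Section Conjugacy.

Variables (T U : finType) (f : T -> T) (g : U -> U).

Definition conj_on (A : {set T}) (B : {set U}) (h : T -> U) :=
  [/\ h @: A = B, {in A &, injective h} & {in A, forall x, h (f x) = g (h x)}].

Lemma conj_on_setU (A1 A2 : {set T}) (B1 B2 : {set U}) h1 h2 :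
  {homo f : x / x \in A1} -> {homo f : x / x \in A2} ->
  [disjoint A1 & A2] -> [disjoint B1 & B2] ->
  conj_on A1 B1 h1 -> conj_on A2 B2 h2 ->
  conj_on (A1 :|: A2) (B1 :|: B2) (fun x => if x \in A1 then h1 x else h2 x).
Proof.
move=> fA1 fA2 dA dB [im1 inj1 c1] [im2 inj2 c2].
have A2_A1 x : x \in A2 -> x \in A1 = false by move/(disjointFl dA).
have h12 x1 x2 : x1 \in A1 -> x2 \in A2 -> h1 x1 != h2 x2.
  move=> x1A x2A; have h1B1 : h1 x1 \in B1 by rewrite -im1 imset_f.
  have h2B2 : h2 x2 \in B2 by rewrite -im2 imset_f.
  by apply: contraTneq h2B2 => <-; rewrite (disjointFr dB h1B1).
split.
- rewrite imsetU -im1 -im2; congr (_ :|: _); apply: eq_in_imset => x xA.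
    by rewrite xA.
  by rewrite A2_A1.
- move=> x1 x2; rewrite !inE => /orP [] x1A /orP [] x2A.
  + by rewrite x1A x2A; apply: inj1.
  + by rewrite x1A A2_A1 // => /eqP; rewrite (negbTE (h12 _ _ x1A x2A)).
  + by rewrite x2A A2_A1 // => /esym/eqP; rewrite (negbTE (h12 _ _ x2A x1A)).
  + by rewrite !A2_A1 //; apply: inj2.
- move=> x; rewrite inE => /orP [] xA.
    by rewrite xA fA1 // c1.
  by rewrite !A2_A1 ?fA2 // c2.
Qed.

Lemma conj_on_orbit x y :
  x \in cycle_states f -> y \in cycle_states g -> order f x = order g y ->
  conj_on (orbit_set f x) (orbit_set g y) (fun z => iter (findex f x z) g y).
Proof.
move=> x_cyc y_cyc oxy; split.
- apply/setP => w; rewrite [w \in orbit_set g y]inE; apply/imsetP/idP.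
    by case=> z _ ->; apply: fconnect_iter.
  move=> yw; exists (iter (findex g y w) f x); first by rewrite inE fconnect_iter.
  by rewrite findex_iter ?iter_findex // oxy findex_max.
- move=> z1 z2; rewrite !inE => xz1 xz2 /(congr1 (findex g y)).
  rewrite !findex_iter -?oxy ?findex_max // => e.
  by rewrite -(iter_findex xz1) -(iter_findex xz2) e.
- move=> z; rewrite inE => xz.
  rewrite -{1}(iter_findex xz) -iterS (iter_modn _ (iter_order_cycle_state x_cyc)).
  by rewrite findex_iter ?ltn_pmod // oxy -(iter_modn _ (iter_order_cycle_state y_cyc)).
Qed.

(* [h0] is only there to provide a map [T -> U] when [A] is empty. *)
Lemma conj_on_of_card_fixed_in (h0 : T -> U) (A : {set T}) (B : {set U}) :
  {homo f : x / x \in A} -> {homo g : y / y \in B} ->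
  A \subset cycle_states f -> B \subset cycle_states g ->
  (forall m, 0 < m -> #|fixed_in f A m| = #|fixed_in g B m|) ->
  exists h, conj_on A B h.
Proof.
have [n] := ubnP #|A|; elim: n A B => // n IH A B ltAn fA gB Acyc Bcyc eqAB.
have [A0 | [x0 x0A]] := set_0Vmem A.
  have -> : B = set0.
    have [// | [y0 y0B]] := set_0Vmem B.
    have eqBA m : 0 < m -> #|fixed_in g B m| = #|fixed_in f A m|.
      by move=> m_gt0; rewrite eqAB.
    have [y _ [x]] := exists_same_order Bcyc Acyc eqBA y0B.
    by rewrite A0 inE.
  by exists h0; rewrite A0; split=> [|x|x]; rewrite ?imset0 ?inE.
have [x xA [y yB oxy]] := exists_same_order Acyc Bcyc eqAB x0A.
have x_cyc := subsetP Acyc x xA; have y_cyc := subsetP Bcyc y yB.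
have sxA := orbit_set_sub fA xA; have syB := orbit_set_sub gB yB.
set A' := A :\: orbit_set f x; set B' := B :\: orbit_set g y.
have [h' conj_h'] : exists h, conj_on A' B' h.
  apply: IH (stable_setD_orbit fA Acyc) (stable_setD_orbit gB Bcyc) _ _ _.
  - move: (order_gt0 f x) (subset_leq_card sxA) ltAn.
    by rewrite cardsD (setIidPr sxA) card_orbit_set; lia.
  - exact: subset_trans (subsetDl _ _) Acyc.
  - exact: subset_trans (subsetDl _ _) Bcyc.
  - move=> m m_gt0; apply/eqP; move/eqP: (eqAB m m_gt0).
    rewrite (card_fixed_inD _ _ sxA) (card_fixed_inD _ _ syB).
    by rewrite !card_fixed_in_orbit // oxy eqn_add2l.
exists (fun z => if z \in orbit_set f x then iter (findex f x z) g y else h' z).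
rewrite -(setID A (orbit_set f x)) -(setID B (orbit_set g y)).
rewrite (setIidPr sxA) (setIidPr syB).
apply: conj_on_setU (conj_on_orbit _ _ _) conj_h' => //.
- exact: orbit_set_stable.
- exact: stable_setD_orbit.
- by rewrite disjoint_sym disjoints_subset subsetDr.
- by rewrite disjoint_sym disjoints_subset subsetDr.
Qed.

End Conjugacy.

Lemma iter_fds_pow k (T : finType) (f : T -> T) m x :
  iter m (fds_pow k f) x = [ffun i => iter m f (x i)].
Proof.
elim: m => [|m IH]; apply/ffunP => i; first by rewrite ffunE.
by rewrite iterS {1}/fds_pow IH !ffunE.
Qed.

Lemma card_fixed_in_fds_pow k (T : finType) (f : T -> T) m :
  #|fixed_in (fds_pow k f) setT m| = #|fixed_in f setT m| ^ k.
Proof.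
rewrite -[in RHS](card_ord k) -card_ffun_on; apply: eq_card => x.
rewrite !inE iter_fds_pow; apply/eqP/ffun_onP => [fx i | fx].
  by rewrite !inE -{2}fx ffunE eqxx.
by apply/ffunP => i; rewrite ffunE; apply/eqP; move: (fx i); rewrite !inE.
Qed.

Lemma card_fixed_in_iso (T U : finType) (f : T -> T) (g : U -> U) m :
  fds_iso f g -> #|fixed_in f setT m| = #|fixed_in g setT m|.
Proof.
case=> h [[h' hK h'K] fgh].
have iter_h x : h (iter m f x) = iter m g (h x).
  by elim: m => //= n IH; rewrite fgh IH.
rewrite -(card_imset _ (can_inj hK)); apply: eq_card => y.
rewrite !inE; apply/imsetP/eqP => [[x] | fy].
  by rewrite !inE => /eqP fx ->; rewrite -iter_h fx.
exists (h' y); rewrite ?h'K // !inE.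
by apply/eqP/(can_inj hK); rewrite iter_h h'K fy.
Qed.

Lemma cycle_part_iso_of_conj_on (T U : finType) (f : T -> T) (g : U -> U) h :
  conj_on f g (cycle_states f) (cycle_states g) h -> cycle_part_iso f g.
Proof.
case=> im_h inj_h fgh; exists h; split; [|split; [|split]].
- by move=> x /cycle_statesP x_cyc; apply/cycle_statesP; rewrite -im_h imset_f.
- by move=> x1 x2 /cycle_statesP x1_cyc /cycle_statesP x2_cyc; apply: inj_h.
- move=> y /cycle_statesP; rewrite -im_h => /imsetP [x x_cyc ->].
  by exists x; split=> //; apply/cycle_statesP.
- by move=> x /cycle_statesP; apply: fgh.
Qed.

Theorem mainTheorem17 (k : nat) (T U : finType) (f : T -> T) (g : U -> U) :
  1 <= k ->
  fds_iso (fds_pow k f) (fds_pow k g) ->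
  cycle_part_iso f g.
Proof.
move=> k_gt0 iso_fg; have [H _] := iso_fg.
have eq_fixed m : 0 < m ->
    #|fixed_in f (cycle_states f) m| = #|fixed_in g (cycle_states g) m|.
  move=> m_gt0; rewrite !fixed_in_cycle_states //; apply: (expIn k_gt0).
  by rewrite -!card_fixed_in_fds_pow; apply: card_fixed_in_iso.
have [h] := conj_on_of_card_fixed_in (fun t => H [ffun=> t] (Ordinal k_gt0))
  (@cycle_states_stable _ f) (@cycle_states_stable _ g) (subxx _) (subxx _) eq_fixed.
exact: cycle_part_iso_of_conj_on.
Qed.
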